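(* Let $T>0$ and $K>0$. Assume that $|c(y)(0)|\le K$ for every $c\in\mathcal{C}$, that the density $\rho$ is nonincreasing, and that $$\rho(T)\ge d\qquad\text{and}\qquad K\le\bar F(T).$$ Then $\mathbb{E}[|\mathcal{H}(\mathcal{T}_{t,c})|]\le 1$ for all $c\in\mathcal{C}$ and all $t\in[0,T]$; in particular the integrability hypothesis $\sup_{c\in\mathcal{C},\,t\in[0,T]}\mathbb{E}[|\mathcal{H}(\mathcal{T}_{t,c})|]<\infty$ holds.
   Context: Let $d\ge1$ and let $f=(f_1,\ldots,f_d):\mathbb{R}^d\to\mathbb{R}^d$ with each $f_i$ smooth ($C^\infty$) and Lipschitz; $y(0)\in\mathbb{R}^d$ is a fixed initial condition. Write $\partial_j=\partial/\partial y_j$. For $g:\mathbb{R}^d\to\mathbb{R}$, $g^*$ sends a path $y:\mathbb{R}_+\to\mathbb{R}^d$ to $t\mapsto g(y(t))$; ${\rm Id}_i$ sends $y\mapsto y_i$. Codes: $\mathcal{C}=\{{\rm Id}_i:1\le i\le d\}\cup\{(\partial_1^{i_1}\cdots\partial_d^{i_d}f_i)^*: i_1,\ldots,i_d\ge0,\ 1\le i\le d\}$ (formal symbols). Mechanism: $\mathcal{M}({\rm Id}_i)=\{(f_i^* )\}$ and $\mathcal{M}(g^* )=\{(f_1^*,(\partial_1g)^* ),\ldots,(f_d^*,(\partial_dg)^* )\}$. The value $c(y)(0)$ is $y_i(0)$ if $c={\rm Id}_i$ and $g(y(0))$ if $c=g^*$. Random coding tree: fix a probability density $\rho:\mathbb{R}_+\to(0,\infty)$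 with tail $\bar F(t)=\int_t^\infty\rho(u)\,du$. For $t\ge0$ and $c\in\mathcal{C}$, $\mathcal{T}_{t,c}$ is the branching particle system started at time $0$ by one particle with code $c$: each particle $k$, with code $c_k$ born at time $T_{k-}$, has an independent lifetime $\tau_k$ of density $\rho$. If $T_{k-}+\tau_k>t$ the particle is a leaf (set $\mathcal{K}^\partial$). Otherwise it dies at $T_k=T_{k-}+\tau_k\le t$ (set $\mathcal{K}^\circ$), an independent tuple $I_k$ is drawn uniformly in $\mathcal{M}(c_k)$, with probability $q_{c_k}(I_k)=1/|\mathcal{M}(c_k)|$, and the particle is replaced by $|I_k|$ offspring born at $T_k$ carrying the codes listed in $I_k$, evolving independently by the same rule. The functional is $$\mathcal{H}(\mathcal{T}_{t,c})=\prod_{k\in\mathcal{K}^\circ}\frac{1}{q_{c_k}(I_k)\,\rho(T_k-T_{k-})}\prod_{k\in\mathcal{K}^\partial}\frac{c_k(y)(0)}{\bar F(t-T_{k-})}.$$ *)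

From HB Require Import structures.
From mathcomp Require Import all_boot all_order all_algebra.
From mathcomp Require Import all_classical all_reals all_analysis.
Set Implicit Arguments. Unset Strict Implicit. Unset Printing Implicit Defensive.
Import Order.TTheory GRing.Theory Num.Theory.
Import numFieldNormedType.Exports.
Local Open Scope classical_set_scope.
Local Open Scope ring_scope.

Section Defs.
Variables (R : realType) (d : nat).

Definition unitv (j : 'I_d) : 'rV[R]_d := \row_k (k == j)%:R.

Definition partial (j : 'I_d) (g : 'rV[R]_d -> R^o) : 'rV[R]_d -> R^o :=
  fun x => 'D_(unitv j) g x.

Definition iter_partials (js : seq 'I_d) (g : 'rV[R]_d -> R^o) :=
  foldr partial g js.

(* d_1^{a_1} ... d_d^{a_d} g  (d_d applied first, d_1 last) *)
Definition dpow (a : 'I_d -> nat) (g : 'rV[R]_d -> R^o) : 'rV[R]_d -> R^o :=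
  foldr (fun j h => iter (a j) (partial j) h) g (enum 'I_d).

Definition smooth (g : 'rV[R]_d -> R^o) :=
  forall (js : seq 'I_d) (x : 'rV[R]_d), differentiable (iter_partials js g) x.

(* codes: Id_i, and (d_1^{a_1}...d_d^{a_d} f_i)^* *)
Inductive bcode := CId of 'I_d | CDer of 'I_d & ('I_d -> nat).

Definition zero_mi : 'I_d -> nat := fun _ => 0%N.
Definition add_e (a : 'I_d -> nat) (j : 'I_d) : 'I_d -> nat :=
  fun k => if k == j then (a k).+1 else a k.

Definition code_val (f : 'I_d -> 'rV[R]_d -> R^o) (y0 : 'rV[R]_d) (c : bcode) : R :=
  match c with
  | CId i => y0 ord0 i
  | CDer i a => dpow a (f i) y0
  end.

(* the j-th element of the mechanism M(c) (for Id_i the unique element) *)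
Definition mech (c : bcode) (j : 'I_d) : seq bcode :=
  match c with
  | CId i => [:: CDer i zero_mi]
  | CDer i a => [:: CDer j zero_mi; CDer i (add_e a j)]
  end.

Definition mech_size (c : bcode) : nat :=
  match c with CId _ => 1%N | CDer _ _ => d end.

Definition qc (c : bcode) : R := (mech_size c)%:R^-1.

Definition Fbar (rho : R -> R) (t : R) : R :=
  fine (\int[lebesgue_measure]_(u in `[t, +oo[) (rho u)%:E)%E.

(* H restricted to trees of at most n+1 generations: the particle with
   Ulam-Harris label k, born at time b, with bcode c, and its descendants. *)
Fixpoint Hfuel (T : Type) (f : 'I_d -> 'rV[R]_d -> R^o) (y0 : 'rV[R]_d)
  (rho : R -> R) (tau : seq nat -> T -> R) (J : seq nat -> T -> 'I_d)
  (t : R) (n : nat) (k : seq nat) (b : R) (c : bcode) (w : T) : option R :=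
  if t < b + tau k w then Some (code_val f y0 c / Fbar rho (t - b))
  else match n with
  | 0%N => None
  | n'.+1 =>
    let s := tau k w in
    let I := mech c (J k w) in
    let fix prodch (m : nat) (l : seq bcode) : option R :=
      match l with
      | [::] => Some 1
      | c' :: l' =>
        match Hfuel f y0 rho tau J t n' (rcons k m) (b + s) c' w, prodch m.+1 l' with
        | Some v, Some p => Some (v * p)
        | _, _ => None
        end
      end in
    match prodch 0%N I with
    | Some p => Some ((qc c * rho s)^-1 * p)
    | None => None
    end
  end.

(* H(T_{t,c})(w): defined whenever the random tree is finite (which happens
   almost surely); 0 (arbitrary) otherwise. *)
Definition Hfun (T : Type) (f : 'I_d -> 'rV[R]_d -> R^o) (y0 : 'rV[R]_d)
  (rho : R -> R) (tau : seq nat -> T -> R) (J : seq nat -> T -> 'I_d)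
  (t : R) (c : bcode) (w : T) : R :=
  xget 0 [set v | exists n, Hfuel f y0 rho tau J t n [::] 0 c w = Some v].

End Defs.

From HB Require Import structures.
From mathcomp Require Import all_boot all_order all_algebra.
From mathcomp Require Import all_classical all_reals all_analysis.
From mathcomp Require Import simple_functions measurable_realfun.
Import HBNNSimple.

Set Implicit Arguments.
Unset Strict Implicit.
Unset Printing Implicit Defensive.
Import Order.TTheory GRing.Theory Num.Theory.
Import numFieldNormedType.Exports.
Local Open Scope classical_set_scope.
Local Open Scope ring_scope.

(* The bound holds pathwise, not only in expectation.  Almost surely all
   lifetimes are nonnegative, so every particle dies at a time s <= t <= T and
   contributes the factor 1 / (q_c rho(s)) = |M(c)| / rho(s) <= d / rho(T) <= 1,
   while every leaf born at b contributes |c(y)(0)| / Fbar(t - b) <= K / Fbar(T)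
   <= 1.  Hence |H| <= 1 almost surely and E|H| <= 1. *)

Section PathwiseBound.
Variables (R : realType) (d : nat) (f : 'I_d -> 'rV[R]_d -> R^o) (y0 : 'rV[R]_d).
Variables (rho : R -> R) (Ω : Type) (tau : seq nat -> Ω -> R) (J : seq nat -> Ω -> 'I_d).
Variables (t : R) (w : Ω).
Hypothesis leaf_le1 : forall c x, 0 <= x <= t -> `|code_val f y0 c / Fbar rho x| <= 1.
Hypothesis node_le1 : forall (c : bcode d) s, 0 <= s <= t -> `|(qc R c * rho s)^-1| <= 1.
Hypothesis tau_ge0 : forall k, 0 <= tau k w.

Lemma Hfuel_norm_le1 n k b c v : 0 <= b -> b <= t ->
  Hfuel f y0 rho tau J t n k b c w = Some v -> `|v| <= 1.
Proof.
elim: n k b c v => [|n IH] k b c v b0 bt /=.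
  by case: ifP => // _ [<-]; apply: leaf_le1; rewrite subr_ge0 bt lerBlDr lerDl b0.
case: ifP => [_ [<-]|]; first by apply: leaf_le1; rewrite subr_ge0 bt lerBlDr lerDl b0.
move/negbT; rewrite -leNgt => death_le_t.
have death_ge0 : 0 <= b + tau k w by rewrite addr_ge0.
have children_le1 l m p : (fix prodch (m : nat) (l : seq (bcode d)) : option R :=
      match l with
      | [::] => Some 1
      | c' :: l' =>
        match Hfuel f y0 rho tau J t n (rcons k m) (b + tau k w) c' w, prodch m.+1 l' with
        | Some v, Some p => Some (v * p)
        | _, _ => None
        end
      end) m l = Some p -> `|p| <= 1.
  elim: l m p => [|c' l IHl] m p /=; first by move=> [<-]; rewrite normr1.
  case E1: (Hfuel _ _ _ _ _ _ _ _ _ _ _) => [v1|] //.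
  case E2: (_ m.+1 l) => [p1|] // [<-].
  by rewrite normrM mulr_ile1 // ?(IH _ _ _ _ death_ge0 death_le_t E1) ?(IHl _ _ E2).
case E: (_ 0%N _) => [p|] // [<-].
rewrite normrM mulr_ile1 ?(children_le1 _ _ _ E) //.
by apply: node_le1; rewrite tau_ge0 (le_trans _ death_le_t) // lerDr.
Qed.

Lemma Hfun_norm_le1 c : 0 <= t -> `|Hfun f y0 rho tau J t c w| <= 1.
Proof.
move=> t0; rewrite /Hfun.
set S := [set v | exists n, _].
have [[v Sv]|noS] := pselect (exists v, S v).
  have [n Hn] : S (xget 0 S) by apply: xgetPex; exists v.
  exact: Hfuel_norm_le1 (lexx 0) t0 Hn.
by rewrite xgetPN ?normr0 // => v Sv; apply: noS; exists v.
Qed.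

End PathwiseBound.

(* No measurability of [g] is available, so the bound is taken through the
   supremum over nonnegative simple functions below [|g|]. *)
Lemma integral_norm_le1_ae (R : realType) (dΩ : measure_display)
    (Ω : measurableType dΩ) (P : probability Ω R) (g : Ω -> R) (N : set Ω) :
  P.-negligible N -> (forall w, ~ N w -> `|g w| <= 1) ->
  (\int[P]_w (`|g w|)%:E <= 1)%E.
Proof.
move=> negN g_le1.
rewrite ge0_integralTE; last by move=> w; rewrite lee_fin.
apply: ge_ereal_sup => _ [h h_le <-].
have := integral_nnsfun P measurableT h; rewrite patch_setT => <-.
apply: (@le_trans _ _ (\int[P]_x (cst 1 x))%E); last first.
  by rewrite integral_cst // mul1e probability_le1.
apply: ae_ge0_le_integral => //.
- by move=> x _; rewrite lee_fin; exact: fun_ge0.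
- by apply/measurable_EFinP; exact: measurable_funPT.
apply: (negligibleS _ negN) => x /= hx; apply: contrapT => Nx; apply: hx => _.
by apply: le_trans (h_le x) _; rewrite lee_fin g_le1.
Qed.

Lemma negligible_countable_union (R : realType) (dΩ : measure_display)
    (Ω : measurableType dΩ) (mu : {measure set Ω -> \bar R}) (I : countType)
    (A : I -> set Ω) :
  (forall i, mu.-negligible (A i)) ->
  exists2 N, mu.-negligible N & forall w, ~ N w -> forall i, ~ A i w.
Proof.
move=> negA; exists (\bigcup_n oapp A set0 (@unpickle I n)).
  by apply: negligible_bigcup => n; case: unpickle => [i|] /=; [exact: negA|exact: negligible_set0].
by move=> w notN i Aiw; apply: notN; exists (pickle i); rewrite // pickleK.
Qed.

Section TailFunction.
Variables (R : realType) (rho : R -> R).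
Hypothesis rho_meas : measurable_fun (`[0, +oo[ : set R) rho.
Hypothesis rho_pos : forall u, 0 <= u -> 0 < rho u.
Hypothesis rho_int :
  (\int[lebesgue_measure]_(u in (`[0%R, +oo[ : set R)) (rho u)%:E = 1)%E.

Let tail x := (\int[lebesgue_measure]_(u in `[x, +oo[) (rho u)%:E)%E.

Let tail_ge0 x : 0 <= x -> (0 <= tail x)%E.
Proof.
move=> x0; apply: integral_ge0 => u; rewrite /= in_itv /= andbT => xu.
by rewrite lee_fin ltW // rho_pos // (le_trans x0).
Qed.

Let tail_le x y : 0 <= x -> x <= y -> (tail y <= tail x)%E.
Proof.
move=> x0 xy; apply: ge0_subset_integral => //.
- apply/measurable_EFinP; apply: measurable_funS rho_meas => //.
  by move=> u /=; rewrite !in_itv /= !andbT => /(le_trans x0).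
- by move=> u; rewrite /= in_itv /= andbT => xu; rewrite lee_fin ltW // rho_pos // (le_trans x0).
- by move=> u /=; rewrite !in_itv /= !andbT => /(le_trans xy).
Qed.

Let tail_fin_num x : 0 <= x -> tail x \is a fin_num.
Proof.
move=> x0; rewrite ge0_fin_numE ?tail_ge0 //.
by rewrite (le_lt_trans (tail_le (lexx 0%R) x0)) // /tail rho_int ltry.
Qed.

Lemma Fbar_le x y : 0 <= x -> x <= y -> Fbar rho y <= Fbar rho x.
Proof.
move=> x0 xy; apply: fine_le; rewrite ?tail_fin_num ?(le_trans x0) //.
exact: tail_le.
Qed.

Lemma leaf_weight_le1 (T K v x : R) : `|v| <= K -> 0 < K -> K <= Fbar rho T ->
  0 <= x <= T -> `|v / Fbar rho x| <= 1.
Proof.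
move=> vK K0 KF /andP[x0 xT].
have FTx := Fbar_le x0 xT.
have Fx0 : 0 < Fbar rho x by rewrite (lt_le_trans K0) // (le_trans KF).
rewrite normrM normfV (gtr0_norm Fx0) ler_pdivrMr // mul1r.
by rewrite (le_trans vK) // (le_trans KF).
Qed.

End TailFunction.

Lemma mech_size_in (d : nat) (c : bcode d) : (0 < d)%N -> (0 < mech_size c <= d)%N.
Proof. by case: c => [i|i a] /= ->; rewrite ?leqnn. Qed.

Lemma node_weight_le1 (R : realType) (d : nat) (rho : R -> R) (T s : R)
    (c : bcode d) : (0 < d)%N ->
  (forall u v, 0 <= u -> u <= v -> rho v <= rho u) -> (forall u, 0 <= u -> 0 < rho u) ->
  d%:R <= rho T -> 0 <= s <= T -> `|(qc R c * rho s)^-1| <= 1.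
Proof.
move=> d_gt0 rho_noninc rho_pos dT /andP[s0 sT].
have rho_s0 := rho_pos s s0.
have /andP[m_gt0 m_le] := mech_size_in c d_gt0.
have m0 : 0 < (mech_size c)%:R :> R by rewrite ltr0n.
rewrite /qc invfM invrK ger0_norm; last by rewrite mulr_ge0 // invr_ge0 ltW.
rewrite -[X in X <= _]/(_ / _) ler_pdivrMr // mul1r.
by rewrite (le_trans _ (le_trans dT (rho_noninc _ _ s0 sT))) // ler_nat.
Qed.

Lemma preimage_neg_negligible (R : realType) (dΩ : measure_display)
    (Ω : measurableType dΩ) (mu : {measure set Ω -> \bar R}) (rho : R -> R)
    (X : Ω -> R) :
  measurable_fun setT X ->
  (forall A, measurable A ->
     mu (X @^-1` A) = (\int[lebesgue_measure]_(u in A `&` `[0%R, +oo[) (rho u)%:E)%E) ->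
  mu.-negligible (X @^-1` `]-oo, 0[).
Proof.
move=> mX X_law; exists (X @^-1` `]-oo, 0[); split => //.
  by rewrite -[X in measurable X]setTI; exact: mX.
rewrite X_law //.
suff -> : `]-oo, 0[ `&` `[0, +oo[ = set0 :> set R by rewrite integral_set0.
apply/seteqP; split => u //=; rewrite !in_itv /= andbT => -[u_lt0 u_ge0].
by move: (lt_le_trans u_lt0 u_ge0); rewrite ltxx.
Qed.

Theorem proposition1 (R : realType) (d : nat) (d_gt0 : (0 < d)%N)
  (f : 'I_d -> 'rV[R]_d -> R^o) (y0 : 'rV[R]_d)
  (f_smooth : forall i, smooth (f i)) (f_lip : forall i, lipschitz (f i))
  (rho : R -> R)
  (rho_meas : measurable_fun (`[0, +oo[ : set R) rho)
  (rho_pos : forall u, 0 <= u -> 0 < rho u)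
  (rho_int : (\int[lebesgue_measure]_(u in (`[0%R, +oo[ : set R)) (rho u)%:E = 1)%E)
  (dΩ : measure_display) (Ω : measurableType dΩ) (P : probability Ω R)
  (tau : seq nat -> Ω -> R) (J : seq nat -> Ω -> 'I_d)
  (tau_meas : forall k, measurable_fun setT (tau k))
  (J_meas : forall k j, measurable (J k @^-1` [set j]))
  (tau_law : forall k (A : set R), measurable A ->
     P (tau k @^-1` A) = (\int[lebesgue_measure]_(u in A `&` (`[0%R, +oo[ : set R)) (rho u)%:E)%E)
  (J_law : forall k j, P (J k @^-1` [set j]) = (d%:R^-1)%:E)
  (indep : forall (ks : seq (seq nat)) (A : seq nat -> set R) (B : seq nat -> set 'I_d),
     uniq ks -> (forall k, measurable (A k)) ->
     P (\bigcap_(k in [set` ks]) (tau k @^-1` A k `&` J k @^-1` B k)) =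
     (\prod_(k <- ks) (P (tau k @^-1` A k) * P (J k @^-1` B k)))%E)
  (T K : R) (T_gt0 : 0 < T) (K_gt0 : 0 < K)
  (val_bound : forall c : bcode d, `|code_val f y0 c| <= K)
  (rho_noninc : forall u v, 0 <= u -> u <= v -> rho v <= rho u)
  (rho_T : d%:R <= rho T) (K_Fbar : K <= Fbar rho T) :
  forall (c : bcode d) (t : R), 0 <= t -> t <= T ->
    (\int[P]_w (`|Hfun f y0 rho tau J t c w|)%:E <= 1)%E.
Proof.
move=> c t t0 tT.
have leaf_le1 c' x : 0 <= x <= t -> `|code_val f y0 c' / Fbar rho x| <= 1.
  case/andP=> x0 xt.
  apply: (leaf_weight_le1 rho_meas rho_pos rho_int (val_bound c') K_gt0 K_Fbar).
  by rewrite x0 (le_trans xt tT).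
have node_le1 (c' : bcode d) s : 0 <= s <= t -> `|(qc R c' * rho s)^-1| <= 1.
  case/andP=> s0 st; apply: (node_weight_le1 _ d_gt0 rho_noninc rho_pos rho_T).
  by rewrite s0 (le_trans st tT).
have [N negN tau_ge0] : exists2 N, P.-negligible N &
    forall w, ~ N w -> forall k, ~ (tau k @^-1` `]-oo, 0[) w.
  apply: negligible_countable_union => k.
  exact: preimage_neg_negligible (tau_meas k) (tau_law k).
apply: (integral_norm_le1_ae negN) => w /tau_ge0 tau_w_ge0.
apply: Hfun_norm_le1 leaf_le1 node_le1 _ _ t0 => k.
by rewrite leNgt; apply/negP => tk; apply: (tau_w_ge0 k); rewrite /= in_itv.
Qed.
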